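(* Let $G=(V,A)$ be a graph and $\mathfrak n=\mathfrak n(G)$ as below, and let $S:W^*\to W$ be an antisymmetric linear map with $T_\alpha ST_\beta+T_\beta ST_\alpha=0$ for all $\alpha,\beta\in A$. Write $S_{i,j}$ for its matrix entries with respect to the bases $\{e_i^*\}$ of $W^*$ and $\{e_i\}$ of $W$. Then: (1) if there is an edge joining $e_i$ and $e_j$, then $S_{i,j}=0$; (2) if there are edges $\alpha$ joining $e_i$ and $e_{i'}$ and $\beta$ joining $e_j$ and $e_{j'}$ with $\{i,i'\}\cap\{j,j'\}=\emptyset$, then $S_{i,j}=0$.
   Context: $G=(V,A)$ is a finite simple graph without loops and without isolated vertices, $V=\{e_1,\dots,e_n\}$ ordered, each edge joining $e_i,e_j$ ($i<j$) oriented from $e_i$ to $e_j$. $\mathfrak n(G)$ has basis $V\cup A$, $[e_i,e_j]=\alpha$ if $\alpha$ goes from $e_i$ to $e_j$, $[e_i,e_j]=0$ if not adjacent, edges central; $W=\mathrm{span}(V)$, center $\mathfrak z=\mathrm{span}(A)$. For $\alpha\in A$ define $T_\alpha:W\to W^*$ by $[v,w]=\sum_{\alpha}T_\alpha(v)(w)\alpha$; explicitly, if $\alpha$ joins $e_i$ to $e_j$ with $i<j$, then $T_\alpha(e_i)=e_j^*$, $T_\alpha(e_j)=-e_i^*$, $T_\alpha(e_k)=0$ for $k\ne i,j$. $S$ antisymmetric means $S^t=-S$ under $W^{**}\cong W$. *)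

From HB Require Import structures.
From mathcomp Require Import all_boot all_order all_algebra.
Set Implicit Arguments. Unset Strict Implicit. Unset Printing Implicit Defensive.
Import Order.TTheory GRing.Theory Num.Theory.
Local Open Scope ring_scope.

(* A finite simple graph on vertex set V = {e_0,...,e_{n-1}} (indexed by 'I_n,
   ordered by the order of 'I_n) is an adjacency relation that is symmetric,
   irreflexive (no loops), with no isolated vertices. *)
Definition simple_graph (n : nat) (adj : rel 'I_n) : Prop :=
  [/\ symmetric adj, irreflexive adj & forall i : 'I_n, exists j, adj i j].

(* Matrix of T_alpha : W -> W^* w.r.t. bases {e_k} of W and {e_k^*} of W^*,
   for the edge alpha joining e_i and e_j, oriented from the smaller index to
   the larger. Column k is the coordinate vector of T_alpha(e_k).
   For i < j: T(e_i) = e_j^*, T(e_j) = - e_i^*, T(e_k) = 0 otherwise. *)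
Definition Tmx (F : fieldType) (n : nat) (i j : 'I_n) : 'M[F]_n :=
  if (i < j)%N then delta_mx j i - delta_mx i j
  else delta_mx i j - delta_mx j i.

(** Each [T_alpha] is, up to a sign, the skew matrix [E_ji - E_ij] of its edge,
    and the hypothesis is insensitive to these signs.  Since
    [E_ab S E_cd = S_bc E_ad], a product [X S Y] of skew matrices is an explicit
    combination of four matrix units.  For an edge [X = E_ji - E_ij], entry
    [(j,i)] of [X S X + X S X] is [2 S_ij]; for disjoint edges [ii'] and [jj'],
    entry [(i',j')] of [X S Y + Y S X] is [- S_ij]. *)

From HB Require Import structures.
From mathcomp Require Import all_boot all_order all_algebra.
Import GRing.Theory.
Local Open Scope ring_scope.

Section SkewMatrices.

Variables (R : pzRingType) (n : nat).
Implicit Types (S : 'M[R]_n) (a b c d i j k l : 'I_n).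

Lemma mul_delta_mx_sandwich S a b c d :
  delta_mx a b *m S *m delta_mx c d = S b c *: delta_mx a d.
Proof.
apply/matrixP => p q; rewrite !mxE (bigD1 c) //= big1 => [|k kc]; last first.
  by rewrite [delta_mx _ _ _ _]mxE (negbTE kc) /= mulr0.
rewrite mxE (bigD1 b) //= big1 => [|k kb]; last first.
  by rewrite [delta_mx _ _ _ _]mxE (negbTE kb) andbF mul0r.
rewrite !mxE !eqxx !addr0 /=.
by case: (p == a); case: (q == d); rewrite /= ?mulr1 ?mul1r ?mulr0 ?mul0r.
Qed.

Definition skew_delta i j : 'M[R]_n := delta_mx j i - delta_mx i j.

Lemma skew_delta_sandwich S i j k l :
  skew_delta i j *m S *m skew_delta k l =
    S i l *: delta_mx j k - S i k *: delta_mx j l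
  - S j l *: delta_mx i k + S j k *: delta_mx i l.
Proof.
rewrite /skew_delta !mulmxBl !mulmxBr !mul_delta_mx_sandwich.
by rewrite opprD opprK addrA.
Qed.

Lemma skew_delta_sandwich_diagE S i j :
  i != j -> (skew_delta i j *m S *m skew_delta i j) j i = S i j.
Proof.
move=> /negbTE neq_ij; rewrite skew_delta_sandwich !mxE (eq_sym j i) neq_ij !eqxx /=.
by rewrite !mulr0 !mulr1 !subr0 addr0.
Qed.

Section DisjointEdges.

Variables (S : 'M[R]_n) (i i' j j' : 'I_n).
Hypotheses (neq_ii' : i != i') (neq_jj' : j != j')
  (disjoint : [&& i != j, i != j', i' != j & i' != j']).

Lemma skew_delta_sandwich_disjointE :
  (skew_delta i i' *m S *m skew_delta j j') i' j' = - S i j.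
Proof.
rewrite skew_delta_sandwich !mxE !eqxx (eq_sym i') (eq_sym j') /=.
by rewrite (negbTE neq_ii') (negbTE neq_jj') /= !mulr0 !mulr1 sub0r subr0 addr0.
Qed.

Lemma skew_delta_sandwich_disjoint0 :
  (skew_delta j j' *m S *m skew_delta i i') i' j' = 0.
Proof.
case/and4P: disjoint => _ _ /negbTE neq_i'j /negbTE neq_i'j'.
by rewrite skew_delta_sandwich !mxE neq_i'j neq_i'j' /= !mulr0 !subr0 addr0.
Qed.

End DisjointEdges.

End SkewMatrices.

Arguments skew_delta {R n}.

Lemma Tmx_skew_delta (F : fieldType) n (i j : 'I_n) :
  Tmx F i j = (if (i < j)%N then 1 else -1) *: skew_delta i j.
Proof.
by rewrite /Tmx /skew_delta; case: ifP => _; rewrite ?scale1r // scaleN1r opprB.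
Qed.

Lemma Tmx_anticommute_skew_delta {F : fieldType} {n} {S : 'M[F]_n} {i j k l : 'I_n} :
  Tmx F i j *m S *m Tmx F k l + Tmx F k l *m S *m Tmx F i j = 0 ->
  skew_delta i j *m S *m skew_delta k l + skew_delta k l *m S *m skew_delta i j = 0.
Proof.
have sign_neq0 (b : bool) : (if b then 1 else -1) != 0 :> F.
  by case: b; rewrite ?oppr_eq0 oner_neq0.
rewrite !Tmx_skew_delta -!scalemxAl -!scalemxAr !scalerA.
rewrite [X in X *: (_ *m _ *m skew_delta i j)]mulrC -scalerDr => /eqP.
by rewrite scaler_eq0 mulf_eq0 !(negbTE (sign_neq0 _)) => /eqP.
Qed.

Theorem mainTheorem11 (F : fieldType) (n : nat) (adj : rel 'I_n)
  (HG : simple_graph adj) (H2 : (2 : F) != 0) (S : 'M[F]_n)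
  (Santi : S^T = - S)
  (HS : forall i j k l : 'I_n, adj i j -> adj k l ->
          Tmx F i j *m S *m Tmx F k l + Tmx F k l *m S *m Tmx F i j = 0) :
  (forall i j : 'I_n, adj i j -> S i j = 0) /\
  (forall i i' j j' : 'I_n, adj i i' -> adj j j' ->
     [&& i != j, i != j', i' != j & i' != j'] -> S i j = 0).
Proof.
have [_ irr _] := HG.
have edge_neq u v : adj u v -> u != v by apply: contraTneq => ->; rewrite irr.
have skewHS u v w x (Huv : adj u v) (Hwx : adj w x) :=
  Tmx_anticommute_skew_delta (HS _ _ _ _ Huv Hwx).
split=> [i j Hij | i i' j j' Hii' Hjj' disjoint].
- have /matrixP/(_ j i) := skewHS _ _ _ _ Hij Hij.
  rewrite [LHS]mxE [RHS]mxE skew_delta_sandwich_diagE ?edge_neq // -mulr2n -mulr_natr.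
  by move/eqP; rewrite mulf_eq0 (negbTE H2) orbF => /eqP.
- have /matrixP/(_ i' j') := skewHS _ _ _ _ Hii' Hjj'.
  have [neq_ii' neq_jj'] := (edge_neq _ _ Hii', edge_neq _ _ Hjj').
  rewrite [LHS]mxE [RHS]mxE skew_delta_sandwich_disjointE //.
  rewrite skew_delta_sandwich_disjoint0 // addr0.
  by move/eqP; rewrite oppr_eq0 => /eqP.
Qed.
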